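(* Let $k\geq3$ and let $G$ be a $k$-uniform hypergraph; if $k=3$ assume moreover that $G$ is $K_4^{(3)-}$-free. Let $\Pi=(P,\psi_\Pi)$ be a picture over $G$ with $P\subseteq[k]^m$, let $x\in V(G)$, put $\Pi_x=\psi_\Pi^{-1}(x)$, let $n\geq 1$, and let $\mathscr{L}$ be a collection of combinatorial lines in $(\Pi_x)^n$ containing neither tripods nor triangles. Then the amalgamation $\Pi\boxplus\mathscr{L}=(Q,\psi_\Sigma)$, with $Q=\bigcup_{U\in\mathscr{L}}\eta_U^+[P]\subseteq[k]^{mn}$ and $\psi_\Sigma=\bigcup_{U\in\mathscr{L}}\psi_\Pi\circ(\eta_U^+|_P)^{-1}$, is again a picture over $G$.
   Context: $K_4^{(3)-}$ is the 3-uniform hypergraph with four vertices and three edges. Combinatorial lines in $B^n$ for a finite alphabet $B$: sets $\{\eta(a)\colon a\in B\}$ where, for a partition $[n]=C\cup M$ with $M\neq\emptyset$ and $g\colon C\to B$, $\eta(a)$ has $i$-th coordinate $g(i)$ for $i\in C$ and $a$ for $i\in M$; $M$ is the set of moving coordinates of the line. A quasiline in $[k]^N$ is a $k$-element subset $L$ such that in every coordinate the entries of the points of $L$ are all identical or mutually distinct. A picture over $G$ is a pair $(P,\psi)$ with $P\subseteq[k]^m$ for some $m$ and $\psi\colon P\to V(G)$ such that every quasiline $L\subseteq P$ is a combinatorial line and $\psi[L]\in E(G)$. Three distinct lines form a triangle if any two intersect but they have no common point; three distinct lines $L,L',L''$ through a common point form a tripod if the moving coordinates of $L$ are the disjoint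 union of those of $L'$ and $L''$. $\Pi_x\subseteq[k]^m$ is viewed as an alphabet and $([k]^m)^n$ is identified with $[k]^{mn}$ by concatenating blocks. For $U\in\mathscr{L}$ with fixed representation $(C,M,g)$, $g\colon C\to\Pi_x$, the map $\eta_U^+\colon[k]^m\to[k]^{mn}$ sends $a$ to the tuple of blocks whose $c$-th block is $g(c)$ for $c\in C$ and whose $j$-th block is $a$ for $j\in M$. (The maps $\psi_\Pi\circ(\eta_U^+|_P)^{-1}$ agree on common points of their domains, so $\psi_\Sigma$ is a well-defined function $Q\to V(G)$.) *)

From mathcomp Require Import all_boot.
Set Implicit Arguments. Unset Strict Implicit. Unset Printing Implicit Defensive.

Definition uniform (V : finType) (k : nat) (E : {set {set V}}) : Prop :=
  forall e, e \in E -> #|e| = k.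

(* K_4^{(3)-}: four vertices and three edges.  G contains a copy of it iff
   some 4-set of vertices contains at least three edges (any three
   3-subsets of a 4-set form a copy of K_4^{(3)-}). *)
Definition K4minus_free (V : finType) (E : {set {set V}}) : Prop :=
  ~ exists S : {set V}, #|S| = 4 /\ 3 <= #|[set e in E | e \subset S]|.

(* Points of B^I are functions I -> T, B a subset of T used as alphabet.
   line_pt M g a = eta(a): coordinate i is a if i \in M (moving), g i otherwise. *)
Definition line_pt (I T : finType) (M : {set I}) (g : {ffun I -> T}) (a : T)
  : {ffun I -> T} := [ffun i => if i \in M then a else g i].

(* (M, g) is a representation (C, M, g) of a combinatorial line in B^I,
   with C = ~: M (values of g on M are irrelevant). *)
Definition line_rep (I T : finType) (B : {set T}) (M : {set I}) (g : {ffun I -> T})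
  : Prop := M != set0 /\ (forall i, i \notin M -> g i \in B).

Definition line_of (I T : finType) (B : {set T}) (M : {set I}) (g : {ffun I -> T})
  : {set {ffun I -> T}} := [set line_pt M g a | a in B].

Definition comb_line (I T : finType) (B : {set T}) (L : {set {ffun I -> T}}) : Prop :=
  exists M g, line_rep B M g /\ L = line_of B M g.

Definition quasiline (I : finType) (k : nat) (L : {set {ffun I -> 'I_k}}) : bool :=
  (#|L| == k) &&
  [forall i : I, (#|[set (x : {ffun I -> 'I_k}) i | x in L]| == 1) || (#|[set (x : {ffun I -> 'I_k}) i | x in L]| == #|L|)].

(* A picture over G = (V,E) with point set P in [k]^I (I = 'I_m for [k]^m);
   psi is only relevant on P. *)
Definition picture (I : finType) (k : nat) (V : finType) (E : {set {set V}})
  (P : {set {ffun I -> 'I_k}}) (psi : {ffun I -> 'I_k} -> V) : Prop :=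
  forall L : {set {ffun I -> 'I_k}}, L \subset P -> quasiline L ->
    comb_line [set: 'I_k] L /\ psi @: L \in E.

Lemma blk_lt (n m : nat) (p : 'I_(n * m)) : p %/ m < n.
Proof.
case: m p => [|m] p; first by case: p => p; rewrite muln0.
by rewrite ltn_divLR // (ltn_ord p).
Qed.

Lemma pos_lt (n m : nat) (p : 'I_(n * m)) : p %% m < m.
Proof.
case: m p => [|m] p; first by case: p => p; rewrite muln0.
by rewrite ltn_mod.
Qed.

(* coordinate p = j * m + i of [k]^(n*m) is coordinate i of block j *)
Definition concat_blocks (k m n : nat) (b : {ffun 'I_n -> {ffun 'I_m -> 'I_k}})
  : {ffun 'I_(n * m) -> 'I_k} :=
  [ffun p => b (Ordinal (blk_lt p)) (Ordinal (pos_lt p))].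

Notation pt k m := {ffun 'I_m -> 'I_k}.
(* a fixed representation (M, g) of a line in (Pi_x)^n *)
Notation rep k m n := ({set 'I_n} * {ffun 'I_n -> pt k m})%type.

Definition triangle (T : finType) (L1 L2 L3 : {set T}) : Prop :=
  [/\ L1 != L2, L1 != L3 & L2 != L3] /\
  [/\ L1 :&: L2 != set0, L1 :&: L3 != set0 & L2 :&: L3 != set0] /\
  L1 :&: L2 :&: L3 = set0.

Definition tripod (T I : finType) (L1 L2 L3 : {set T}) (M1 M2 M3 : {set I}) : Prop :=
  [/\ L1 != L2, L1 != L3 & L2 != L3] /\
  L1 :&: L2 :&: L3 != set0 /\
  M1 = M2 :|: M3 /\ [disjoint M2 & M3].

Definition eta_plus (k m n : nat) (U : rep k m n) (a : pt k m)
  : {ffun 'I_(n * m) -> 'I_k} := concat_blocks (line_pt U.1 U.2 a).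

Definition amalg_pts (k m n : nat) (P : {set pt k m}) (calL : {set rep k m n})
  : {set {ffun 'I_(n * m) -> 'I_k}} :=
  \bigcup_(U in calL) [set eta_plus U a | a in P].

(* psi_Sigma = union of psi o (eta_U^+|_P)^{-1}: value psi a for any
   U in calL, a in P with eta_U^+ a = q (outside Q the value is irrelevant,
   we put x0). *)
Definition amalg_psi (k m n : nat) (V : finType) (P : {set pt k m})
  (psi : pt k m -> V) (calL : {set rep k m n}) (x0 : V)
  (q : {ffun 'I_(n * m) -> 'I_k}) : V :=
  match [pick Ua : rep k m n * pt k m |
           (Ua.1 \in calL) && (Ua.2 \in P) && (eta_plus Ua.1 Ua.2 == q)] with
  | Some Ua => psi Ua.2
  | None => x0
  end.

(** A point q of a quasiline L in the amalgamation is eta_U^+(a) for a line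
    U = (M, g) of the family and a point a of Pi.  On an active block j (one on
    which L is not constant) L projects bijectively onto a quasiline of Pi,
    hence onto a combinatorial line of [k]^m whose colours form an edge of G;
    so at most one point of L has block j in Pi_x (is fixed at j), and all the
    others move at j.  If some a has colour x, or some active block moves in
    every point, then all active blocks carry the same line of [k]^m, since two
    combinatorial lines sharing two points coincide, and L is a combinatorial
    line whose colours are those of that block.  Otherwise each active block
    fixes exactly one point and at least two points u, v are fixed somewhere.
    A third fixed point makes the colours of the sources injective: for k > 3
    two active blocks then carry the same line, which is absurd, and for k = 3
    the three block edges span four vertices, a copy of K_4^(3)-.  With exactly
    two fixed points, any third point w moves on all active blocks, its moving
    set is the disjoint union of those of u and v, and the lines of w, u, v
    form a tripod or a triangle. *)

From mathcomp Require Import all_boot zify.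
Set Implicit Arguments. Unset Strict Implicit. Unset Printing Implicit Defensive.

Section Varies.
Variables (T : finType) (U : eqType).

Definition varies_on (f : T -> U) (L : {set T}) : bool :=
  [exists q in L, exists q' in L, f q != f q'].

Lemma varies_onP f (L : {set T}) :
  reflect (exists q q', [/\ q \in L, q' \in L & f q != f q']) (varies_on f L).
Proof.
apply: (iffP idP) => [/exists_inP [q qL /exists_inP [q' q'L nf]] | [q [q' [qL q'L nf]]]].
  by exists q, q'.
by apply/exists_inP; exists q => //; apply/exists_inP; exists q'.
Qed.

Lemma varies_onPn f (L : {set T}) : ~~ varies_on f L -> {in L &, forall q q', f q = f q'}.
Proof.
move=> nv q q' qL q'L; apply/eqP; apply: contraNT nv => nf.
by apply/varies_onP; exists q, q'.
Qed.

End Varies.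

Lemma ffun_neqP (I : finType) (T : eqType) (q q' : {ffun I -> T}) :
  q != q' -> exists p, q p != q' p.
Proof.
move=> nq; apply/existsP; apply: contraNT nq => /existsPn eqq.
by apply/eqP/ffunP => p; apply/eqP; rewrite -[_ == _]negbK eqq.
Qed.

Lemma exists_outside (T : finType) (A B : {set T}) :
  #|B| < #|A| -> exists2 q, q \in A & q \notin B.
Proof.
move=> ltBA; have /subsetPn [q qA qB] : ~~ (A \subset B).
  by apply: contraTN ltBA => /subset_leq_card; rewrite leqNgt.
by exists q.
Qed.

Lemma exists_two_outside (T : finType) (A B : {set T}) :
  #|B|.+1 < #|A| -> exists q1 q2, [/\ q1 \in A :\: B, q2 \in A :\: B & q1 != q2].
Proof.
move=> ltBA; apply/card_gt1P; rewrite cardsD.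
have := subset_leq_card (subsetIr A B); lia.
Qed.

Section Lines.
Variables (I T : finType) (B : {set T}).

Lemma varies_line_moving (M : {set I}) (g : {ffun I -> T}) p :
  varies_on (fun q : {ffun I -> T} => q p) (line_of B M g) -> p \in M.
Proof.
case/varies_onP=> _ [_ [/imsetP [a _ ->] /imsetP [a' _ ->]]].
by rewrite !ffunE; case: (p \in M); rewrite ?eqxx.
Qed.

Lemma line_pt_moving_subset (M M' : {set I}) (g g' : {ffun I -> T}) s t s' t' :
  s != t -> line_pt M g s = line_pt M' g' s' -> line_pt M g t = line_pt M' g' t' ->
  M \subset M'.
Proof.
move=> nst es et; apply/subsetP => p pM; apply: contraNT nst => pM'.
move/ffunP: es => /(_ p); move/ffunP: et => /(_ p).
by rewrite !ffunE pM (negbTE pM') => -> ->.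
Qed.

Lemma comb_line_eq (L1 L2 : {set {ffun I -> T}}) q q' :
  comb_line B L1 -> comb_line B L2 ->
  q \in L1 :&: L2 -> q' \in L1 :&: L2 -> q != q' -> L1 = L2.
Proof.
case=> M1 [g1 [[M1_n0 _] ->]]; case=> M2 [g2 [[M2_n0 _] ->]].
rewrite !inE => /andP [/imsetP [s1 _ ->] /imsetP [s2 _ e1]].
move=> /andP [/imsetP [t1 _ ->] /imsetP [t2 _ e2]] nq.
have ns1 : s1 != t1 by apply: contraNneq nq => ->.
have ns2 : s2 != t2 by apply: contraNneq nq => est; rewrite e1 e2 est.
have eM : M1 = M2.
  apply/eqP; rewrite eqEsubset (line_pt_moving_subset ns1 e1 e2).
  exact: line_pt_moving_subset ns2 (esym e1) (esym e2).
subst M2; have [p pM] := set0Pn _ M1_n0.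
have es : s1 = s2 by move/ffunP: e1 => /(_ p); rewrite !ffunE pM.
subst s2; apply: eq_imset => c; apply/ffunP => r; rewrite !ffunE.
by case: ifP => // /negbT rM; move/ffunP: e1 => /(_ r); rewrite !ffunE (negbTE rM).
Qed.

End Lines.

Section Quasilines.
Variables (I : finType) (k : nat).
Implicit Types (L : {set {ffun I -> 'I_k}}) (q : {ffun I -> 'I_k}) (p : I).
Local Notation coord p := (fun q : {ffun I -> 'I_k} => q p).

Lemma quasiline_card L : quasiline L -> #|L| = k.
Proof. by case/andP=> /eqP. Qed.

Lemma quasiline_coord_inj L p :
  quasiline L -> varies_on (coord p) L -> {in L &, injective (coord p)}.
Proof.
case/andP=> _ /forallP /(_ p) /orP [/cards1P [y img1] | /eqP img_inj]; last first.
  by move=> _; apply/imset_injP; rewrite img_inj.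
case/varies_onP=> q [q' [qL q'L]]; have coord_y r : r \in L -> r p = y.
  by move=> rL; apply/set1P; rewrite -img1; apply: imset_f.
by rewrite !coord_y ?eqxx.
Qed.

Lemma comb_line_varies_eq L q p p' :
  comb_line [set: 'I_k] L -> q \in L ->
  varies_on (coord p) L -> varies_on (coord p') L -> q p = q p'.
Proof.
case=> M [g [_ ->]] /imsetP [a _ ->] /varies_line_moving pM /varies_line_moving p'M.
by rewrite !ffunE pM p'M.
Qed.

Lemma quasiline_comb_line L :
  1 < k -> quasiline L ->
  (forall q p p', q \in L -> varies_on (coord p) L -> varies_on (coord p') L -> q p = q p') ->
  comb_line [set: 'I_k] L.
Proof.
move=> k_gt1 Lq agree; have cardL := quasiline_card Lq.
have [q1 [q2 [q1L q2L /ffun_neqP [p0 np0]]]] : exists q1 q2, [/\ q1 \in L, q2 \in L & q1 != q2].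
  by apply/card_gt1P; rewrite cardL.
have vp0 : varies_on (coord p0) L by apply/varies_onP; exists q1, q2.
exists [set p | varies_on (coord p) L], q1; split.
  by split=> [|p]; [apply/set0Pn; exists p0; rewrite inE | rewrite inE].
apply/eqP; rewrite eqEcard; apply/andP; split; last first.
  by rewrite cardL (leq_trans (leq_imset_card _ _)) // cardsT card_ord.
apply/subsetP => q qL; apply/imsetP; exists (q p0); first by rewrite inE.
apply/ffunP => p; rewrite ffunE inE; case: ifP => [vp | /negbT nvp]; first exact: agree.
exact: varies_onPn nvp q q1 qL q1L.
Qed.

End Quasilines.

Section Blocks.
Variables (k m n : nat).
Implicit Types (q : {ffun 'I_(n * m) -> 'I_k}) (L : {set {ffun 'I_(n * m) -> 'I_k}}).

Lemma blk_idx_lt (j : 'I_n) (i : 'I_m) : j * m + i < n * m.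
Proof.
apply: (@leq_trans (j * m + m)); first by rewrite ltn_add2l.
by rewrite -[X in _ + X]mul1n -mulnDl addn1 leq_mul2r ltn_ord orbT.
Qed.

Definition blk_idx (j : 'I_n) (i : 'I_m) : 'I_(n * m) := Ordinal (blk_idx_lt j i).
Definition blk_of (p : 'I_(n * m)) : 'I_n := Ordinal (blk_lt p).
Definition pos_of (p : 'I_(n * m)) : 'I_m := Ordinal (pos_lt p).
Definition blk q (j : 'I_n) : pt k m := [ffun i => q (blk_idx j i)].

Lemma blk_coord q p : q p = blk q (blk_of p) (pos_of p).
Proof. by rewrite ffunE; congr (q _); apply: val_inj; rewrite /= -divn_eq. Qed.

Lemma blk_concat (b : {ffun 'I_n -> pt k m}) j : blk (concat_blocks b) j = b j.
Proof.
apply/ffunP => i; rewrite !ffunE; have m_gt0 : 0 < m by apply: leq_ltn_trans (ltn_ord i).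
by congr (b _ _); apply: val_inj; rewrite /= ?divnMDl ?modnMDl ?divn_small ?modn_small ?addn0.
Qed.

Lemma blk_eta (U : rep k m n) a j : blk (eta_plus U a) j = line_pt U.1 U.2 a j.
Proof. exact: blk_concat. Qed.

Local Notation blk_img L j := [set blk q j | q in L].

Lemma varies_coord_blk L p :
  varies_on (fun q => q p) L -> varies_on (blk^~ (blk_of p)) L.
Proof.
case/varies_onP=> q [q' [qL q'L nqp]]; apply/varies_onP; exists q, q'; split=> //.
by apply: contra nqp; rewrite [q p]blk_coord [q' p]blk_coord => /eqP ->.
Qed.

Lemma exists_varies_blk L : 1 < #|L| -> exists j, varies_on (blk^~ j) L.
Proof.
case/card_gt1P=> q [q' [qL q'L /ffun_neqP [p nqp]]]; exists (blk_of p).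
by apply: varies_coord_blk; apply/varies_onP; exists q, q'.
Qed.

Lemma quasiline_blk_inj L j :
  quasiline L -> varies_on (blk^~ j) L -> {in L &, injective (blk^~ j)}.
Proof.
move=> Lq /varies_onP [q1 [q2 [q1L q2L /ffun_neqP [i ni]]]].
have vi : varies_on (fun q => q (blk_idx j i)) L.
  by apply/varies_onP; exists q1, q2; rewrite !ffunE in ni.
move=> q q' qL q'L /ffunP /(_ i); rewrite !ffunE.
exact: quasiline_coord_inj Lq vi q q' qL q'L.
Qed.

Lemma quasiline_blk L j :
  quasiline L -> varies_on (blk^~ j) L -> quasiline (blk_img L j).
Proof.
move=> Lq vj; have card_img : #|blk_img L j| = #|L|.
  by apply/eqP/imset_injP; apply: quasiline_blk_inj.
apply/andP; split; first by rewrite card_img (quasiline_card Lq).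
apply/forallP => i; rewrite card_img -imset_comp.
rewrite (eq_imset (g := fun q => q (blk_idx j i))) => [|q]; last by rewrite /= ffunE.
by case/andP: Lq => _ /forallP.
Qed.

Lemma comb_line_of_blk L j0 :
  1 < k -> quasiline L -> comb_line [set: 'I_k] (blk_img L j0) ->
  (forall j, varies_on (blk^~ j) L -> {in L, forall q, blk q j = blk q j0}) ->
  comb_line [set: 'I_k] L.
Proof.
move=> k_gt1 Lq line0 agree; apply: quasiline_comb_line => // q p p' qL.
have to_blk0 r : varies_on (fun q => q r) L ->
    q r = blk q j0 (pos_of r) /\ varies_on (fun b : pt k m => b (pos_of r)) (blk_img L j0).
  move=> vr; have vb := varies_coord_blk vr.
  split; first by rewrite blk_coord (agree _ vb).
  case/varies_onP: vr => q1 [q2 [q1L q2L nr]]; apply/varies_onP.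
  exists (blk q1 j0), (blk q2 j0); split; try exact: imset_f.
  by rewrite -!(agree _ vb) // -!blk_coord.
move=> /to_blk0 [-> vp] /to_blk0 [-> vp'].
exact: comb_line_varies_eq line0 (imset_f _ qL) vp vp'.
Qed.

(* Two lines sharing two points coincide, and the image of block j is a
   bijective copy of L. *)
Lemma blk_agree L j j' s :
  2 < k -> quasiline L -> varies_on (blk^~ j) L ->
  comb_line [set: 'I_k] (blk_img L j) -> comb_line [set: 'I_k] (blk_img L j') -> s \in L ->
  (forall q, q \in L -> q != s -> blk q j = blk q j') -> blk s j = blk s j'.
Proof.
move=> k_gt2 Lq vj line_j line_j' sL agree; have inj := quasiline_blk_inj Lq vj.
have [q1 [q2 [/setD1P [q1s q1L] /setD1P [q2s q2L] nq12]]] :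
    exists q1 q2, [/\ q1 \in L :\ s, q2 \in L :\ s & q1 != q2].
  by apply: exists_two_outside; rewrite cards1 (quasiline_card Lq).
have common q : q \in L -> q != s -> blk q j \in blk_img L j :&: blk_img L j'.
  by move=> qL qs; apply/setIP; split; [|rewrite agree //]; apply: imset_f.
have img_eq : blk_img L j = blk_img L j'.
  apply: comb_line_eq line_j line_j' (common _ q1L q1s) (common _ q2L q2s) _.
  by apply: contra nq12 => /eqP /inj ->.
have /imsetP [q qL bq] : blk s j \in blk_img L j' by rewrite -img_eq; apply: imset_f.
have [q_s | qs] := eqVneq q s; first by rewrite bq q_s.
by move: bq; rewrite -agree // => /inj -/(_ sL qL) s_q; rewrite s_q eqxx in qs.
Qed.

End Blocks.

Definition amalg_pick (k m n : nat) (P : {set pt k m}) (calL : {set rep k m n})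
    (q : {ffun 'I_(n * m) -> 'I_k}) : option (rep k m n * pt k m) :=
  [pick Ua : rep k m n * pt k m |
     (Ua.1 \in calL) && (Ua.2 \in P) && (eta_plus Ua.1 Ua.2 == q)].

Lemma amalg_pickP (k m n : nat) (P : {set pt k m}) (calL : {set rep k m n}) q :
  q \in amalg_pts P calL ->
  exists2 Ua, amalg_pick P calL q = Some Ua &
    [/\ Ua.1 \in calL, Ua.2 \in P & eta_plus Ua.1 Ua.2 = q].
Proof.
case/bigcupP=> U UL /imsetP [a aP ->]; rewrite /amalg_pick.
case: pickP => [Ua /andP [/andP [U1L U2P] /eqP eta_eq] | none]; first by exists Ua.
by move: (none (U, a)); rewrite /= UL aP eqxx.
Qed.

Section Amalgamation.
Variables (k m n : nat) (V : finType) (E : {set {set V}}).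
Variables (P : {set pt k m}) (psi : pt k m -> V) (x : V) (calL : {set rep k m n}).
Hypotheses (k_gt2 : 2 < k) (E_unif : uniform k E) (P_pic : picture E P psi).
Local Notation Pix := [set p in P | psi p == x].
Hypothesis calL_rep : forall U, U \in calL -> line_rep Pix U.1 U.2.
Hypothesis calL_inj : {in calL &, forall U W,
  line_of Pix U.1 U.2 = line_of Pix W.1 W.2 -> U = W}.
Hypothesis no_tripod : forall U1 U2 U3, U1 \in calL -> U2 \in calL -> U3 \in calL ->
  ~ tripod (line_of Pix U1.1 U1.2) (line_of Pix U2.1 U2.2) (line_of Pix U3.1 U3.2)
      U1.1 U2.1 U3.1.
Hypothesis no_triangle : forall U1 U2 U3, U1 \in calL -> U2 \in calL -> U3 \in calL ->
  ~ triangle (line_of Pix U1.1 U1.2) (line_of Pix U2.1 U2.2) (line_of Pix U3.1 U3.2).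
Hypothesis K4_free : k = 3 -> K4minus_free E.

Variable L : {set {ffun 'I_(n * m) -> 'I_k}}.
Hypothesis L_quasi : quasiline L.
(* Any writing of the points of L works; the theorem uses the one chosen by
   amalg_psi. *)
Variable rep_of : {ffun 'I_(n * m) -> 'I_k} -> rep k m n * pt k m.
Hypothesis rep_ofP : forall q, q \in L ->
  [/\ (rep_of q).1 \in calL, (rep_of q).2 \in P & eta_plus (rep_of q).1 (rep_of q).2 = q].

Implicit Types (q : {ffun 'I_(n * m) -> 'I_k}) (j : 'I_n).
Local Notation M q := (rep_of q).1.1.
Local Notation g q := (rep_of q).1.2.
Local Notation a q := (rep_of q).2.
Local Notation line q := (line_of Pix (M q) (g q)).
Local Notation active j := (varies_on (fun q => blk q j) L).
Local Notation blk_img j := [set blk q j | q in L].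

Lemma rep_in_calL q : q \in L -> (rep_of q).1 \in calL.
Proof. by case/rep_ofP. Qed.

Lemma blk_rep q j : q \in L -> blk q j = if j \in M q then a q else g q j.
Proof. by case/rep_ofP=> _ _ {1}<-; rewrite blk_eta ffunE. Qed.

Lemma blk_moving q j : q \in L -> j \in M q -> blk q j = a q.
Proof. by move=> qL jM; rewrite blk_rep // jM. Qed.

Lemma blk_fixed_Pix q j : q \in L -> j \notin M q -> blk q j \in Pix.
Proof.
move=> qL jM; rewrite blk_rep // (negbTE jM).
by case: (calL_rep (rep_in_calL qL)) => _; apply.
Qed.

Lemma blk_fixed_colour q j : q \in L -> j \notin M q -> psi (blk q j) = x.
Proof. by move=> qL /(blk_fixed_Pix qL); rewrite inE => /andP [_ /eqP]. Qed.

Lemma blk_in_P q j : q \in L -> blk q j \in P.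
Proof.
move=> qL; case: (boolP (j \in M q)) => jM.
  by rewrite blk_moving //; case: (rep_ofP qL).
by move: (blk_fixed_Pix qL jM); rewrite inE => /andP [].
Qed.

Lemma active_line j :
  active j -> comb_line [set: 'I_k] (blk_img j) /\ psi @: blk_img j \in E.
Proof.
move=> vj; apply: P_pic; last exact: quasiline_blk.
by apply/subsetP => _ /imsetP [q qL ->]; apply: blk_in_P.
Qed.

(* psi is injective on an edge, which has k = #|blk_img j| vertices. *)
Lemma active_colour_inj j : active j -> {in L &, injective (fun q => psi (blk q j))}.
Proof.
move=> vj q q' qL q'L eq_col; apply: (quasiline_blk_inj L_quasi vj) => //.
have /imset_injP inj : #|psi @: blk_img j| == #|blk_img j|.
  by rewrite (E_unif (active_line vj).2) (quasiline_card (quasiline_blk L_quasi vj)).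
by apply: inj => //; apply: imset_f.
Qed.

Lemma exists_active : exists j, active j.
Proof. by apply: exists_varies_blk; rewrite (quasiline_card L_quasi) ltnW. Qed.

Lemma moving_n0 q : q \in L -> M q != set0.
Proof. by move/rep_in_calL/calL_rep => []. Qed.

Lemma line_neq q q' : q \in L -> q' \in L -> M q != M q' -> line q != line q'.
Proof.
move=> qL q'L; apply: contra => /eqP.
by move/(calL_inj (rep_in_calL qL) (rep_in_calL q'L)) ->.
Qed.

Lemma line_pt_in_line q t : t \in Pix -> line_pt (M q) (g q) t \in line q.
Proof. exact: imset_f. Qed.

Lemma line_pt_rep q t j :
  q \in L -> line_pt (M q) (g q) t j = if j \in M q then t else blk q j.
Proof. by move=> qL; rewrite blk_rep // !ffunE; case: ifP. Qed.

Lemma colour_x_uniq j q q' : active j -> q \in L -> q' \in L ->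
  psi (blk q j) = x -> psi (blk q' j) = x -> q = q'.
Proof. by move=> vj qL q'L cq cq'; apply: (active_colour_inj vj) => //=; rewrite cq cq'. Qed.

Lemma moving_of_colour_x j s q : active j -> s \in L -> psi (blk s j) = x ->
  q \in L -> q != s -> j \in M q.
Proof.
move=> vj sL cs qL; apply: contraNT => jMq; apply/eqP.
exact: colour_x_uniq vj qL sL (blk_fixed_colour qL jMq) cs.
Qed.

Lemma active_blk_agree j j0 s : active j -> active j0 -> s \in L ->
  (forall q, q \in L -> q != s -> blk q j = blk q j0) ->
  {in L, forall q, blk q j = blk q j0}.
Proof.
move=> vj vj0 sL agree q qL; have [-> | qs] := eqVneq q s; last exact: agree.
exact: blk_agree k_gt2 L_quasi vj (active_line vj).1 (active_line vj0).1 sL agree.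
Qed.

Lemma amalg_line_of_blk j0 : active j0 ->
  {in L, forall q, psi (a q) = psi (blk q j0)} ->
  (forall j, active j -> {in L, forall q, blk q j = blk q j0}) ->
  comb_line [set: 'I_k] L /\ [set psi (a q) | q in L] \in E.
Proof.
move=> vj0 colour agree; have [line0 edge0] := active_line vj0; split.
  exact: comb_line_of_blk (ltnW k_gt2) L_quasi line0 agree.
suff -> : [set psi (a q) | q in L] = psi @: blk_img j0 by [].
by rewrite -imset_comp; apply: eq_in_imset.
Qed.

Lemma amalg_line_src_colour_x s : s \in L -> psi (a s) = x ->
  comb_line [set: 'I_k] L /\ [set psi (a q) | q in L] \in E.
Proof.
move=> sL cs; have s_colour j : psi (blk s j) = x.
  by case: (boolP (j \in M s)) => jM; [rewrite blk_moving | rewrite blk_fixed_colour].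
have others j q : active j -> q \in L -> q != s -> blk q j = a q.
  by move=> vj qL qs; rewrite blk_moving // (moving_of_colour_x vj sL).
have [j0 vj0] := exists_active; apply: (amalg_line_of_blk vj0) => [q qL | j vj].
  by have [-> | qs] := eqVneq q s; [rewrite s_colour | rewrite others].
by apply: (active_blk_agree vj vj0 sL) => q qL qs; rewrite !others.
Qed.

Lemma amalg_line_all_moving j0 : active j0 -> {in L, forall q, j0 \in M q} ->
  comb_line [set: 'I_k] L /\ [set psi (a q) | q in L] \in E.
Proof.
move=> vj0 moving0; apply: (amalg_line_of_blk vj0) => [q qL | j vj].
  by rewrite blk_moving ?moving0.
case: (boolP [exists e in L, j \notin M e]) => [|/exists_inPn all_moving].
  case/exists_inP=> e eL jMe.
  apply: (active_blk_agree vj vj0 eL) => q qL qe.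
  by rewrite !blk_moving ?moving0 // (moving_of_colour_x vj eL (blk_fixed_colour eL jMe)).
by move=> q qL; rewrite !blk_moving ?moving0 // -[j \in _]negbK all_moving.
Qed.

Section FixedBlocks.
Hypothesis src_colour : forall q, q \in L -> psi (a q) != x.
Hypothesis active_fixed : forall j, active j -> exists2 e, e \in L & j \notin M e.

Lemma moving_others j e q : active j -> e \in L -> j \notin M e ->
  q \in L -> q != e -> j \in M q.
Proof. by move=> vj eL jMe; apply: moving_of_colour_x vj eL (blk_fixed_colour eL jMe). Qed.

Lemma blk_others j e q : active j -> e \in L -> j \notin M e ->
  q \in L -> q != e -> blk q j = a q.
Proof. by move=> vj eL jMe qL qe; rewrite blk_moving // (moving_others vj eL jMe). Qed.

Lemma fixed_blk_eq j j' e : active j -> active j' -> e \in L ->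
  j \notin M e -> j' \notin M e -> blk e j = blk e j'.
Proof.
move=> vj vj' eL jMe j'Me; apply: (active_blk_agree vj vj' eL) => // q qL qe.
by rewrite (blk_others vj eL jMe) // (blk_others vj' eL j'Me).
Qed.

Lemma src_colour_inj_except j e q q' : active j -> e \in L -> j \notin M e ->
  q \in L -> q' \in L -> q != e -> q' != e -> psi (a q) = psi (a q') -> q = q'.
Proof.
move=> vj eL jMe qL q'L qe q'e eq_col; apply: (active_colour_inj vj) => //=.
by rewrite !(blk_others vj eL jMe).
Qed.

(* If block l were moving in e, every point of L would have the source of e:
   a fixed block of a point of L has colour x, which no source has. *)
Lemma inactive_fixed l e : ~~ active l -> e \in L -> l \notin M e.
Proof.
move=> nvl eL; apply/negP => lMe.
have src_const q : q \in L -> a q = a e.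
  move=> qL; have blk_l : blk q l = a e by rewrite (varies_onPn nvl qL eL) blk_moving.
  case: (boolP (l \in M q)) => lMq; first by rewrite -(blk_moving qL lMq).
  by move: (src_colour eL); rewrite -blk_l blk_fixed_colour ?eqxx.
have [j0 vj0] := exists_active; have [e0 e0L jMe0] := active_fixed vj0.
have [q1 [q2 [/setD1P [q1e q1L] /setD1P [q2e q2L] nq12]]] :
    exists q1 q2, [/\ q1 \in L :\ e0, q2 \in L :\ e0 & q1 != q2].
  by apply: exists_two_outside; rewrite cards1 (quasiline_card L_quasi).
have blk12 : blk q1 j0 = blk q2 j0 by rewrite !(blk_others vj0 e0L jMe0) // !src_const.
by rewrite (quasiline_blk_inj L_quasi vj0 q1L q2L blk12) eqxx in nq12.
Qed.

Lemma moving_active q j : q \in L -> j \in M q -> active j.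
Proof. by move=> qL jMq; apply: contraT => nvj; move: (inactive_fixed nvj qL); rewrite jMq. Qed.

Lemma exists_two_fixed : exists j1 j2 u v,
  [/\ active j1, active j2, u \in L & v \in L] /\ [/\ j1 \notin M u, j2 \notin M v & u != v].
Proof.
have [j1 vj1] := exists_active; have [u uL j1Mu] := active_fixed vj1.
have [l lMu] := set0Pn _ (moving_n0 uL).
have vl := moving_active uL lMu; have [v vL lMv] := active_fixed vl.
by exists j1, l, u, v; split; split=> //; apply: contraTneq lMu => ->.
Qed.

Section ThreeFixed.
Variables (j1 j2 j3 : 'I_n) (u v w : {ffun 'I_(n * m) -> 'I_k}).
Hypotheses (vj1 : active j1) (vj2 : active j2) (vj3 : active j3).
Hypotheses (uL : u \in L) (vL : v \in L) (wL : w \in L).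
Hypotheses (j1Mu : j1 \notin M u) (j2Mv : j2 \notin M v) (j3Mw : j3 \notin M w).
Hypotheses (uv : u != v) (uw : u != w) (vw : v != w).

Lemma src_colour_inj : {in L &, injective (fun q => psi (a q))}.
Proof.
move=> q q' qL q'L.
have [/andP [qu q'u] | not_u] := boolP ((q != u) && (q' != u)).
  exact: src_colour_inj_except vj1 uL j1Mu qL q'L qu q'u.
have [/andP [qv q'v] | not_v] := boolP ((q != v) && (q' != v)).
  exact: src_colour_inj_except vj2 vL j2Mv qL q'L qv q'v.
move: not_u not_v; rewrite !negb_and !negbK => /orP [] /eqP q_u /orP [] /eqP q_v;
  try by move: uv; rewrite -q_u -q_v eqxx.
all: by apply: src_colour_inj_except vj3 wL j3Mw qL q'L _ _; rewrite ?q_u ?q_v.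
Qed.

(* For k > 3 the images of blocks j1 and j2 share two points, hence coincide. *)
Lemma three_fixed_k_gt3 : 3 < k -> False.
Proof.
move=> k_gt3; have inj1 := quasiline_blk_inj L_quasi vj1.
have [q1 [q2 [/setDP [q1L q1uv] /setDP [q2L q2uv] nq12]]] :
    exists q1 q2, [/\ q1 \in L :\: [set u; v], q2 \in L :\: [set u; v] & q1 != q2].
  apply: exists_two_outside; rewrite (quasiline_card L_quasi) cards2.
  by case: (u != v) k_gt3 => // /ltnW.
have common q : q \in L -> q \notin [set u; v] -> blk q j1 \in blk_img j1 :&: blk_img j2.
  rewrite in_set2 negb_or => qL /andP [qu qv]; apply/setIP; split; first exact: imset_f.
  by rewrite (blk_others vj1 uL j1Mu) // -(blk_others vj2 vL j2Mv) //; apply: imset_f.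
have img_eq : blk_img j1 = blk_img j2.
  apply: (comb_line_eq (active_line vj1).1 (active_line vj2).1 (common _ q1L q1uv)
            (common _ q2L q2uv)).
  by apply: contra nq12 => /eqP /inj1 ->.
have /imsetP [q qL] : blk u j2 \in blk_img j1 by rewrite img_eq; apply: imset_f.
rewrite (blk_others vj2 vL j2Mv) // 1?eq_sym //.
have [-> | qu] := eqVneq q u.
  by move=> src_u; move: (src_colour uL); rewrite src_u blk_fixed_colour ?eqxx.
rewrite (blk_others vj1 uL j1Mu) // => /(congr1 psi) /(src_colour_inj uL qL) u_q.
by rewrite u_q eqxx in qu.
Qed.

(* For k = 3 the colour x together with the three source colours spans a
   copy of K_4^(3)-: the edge of block j avoids exactly the colour of the
   point fixed at j. *)
Lemma three_fixed_K4minus : k = 3 ->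
  exists S : {set V}, #|S| = 4 /\ 3 <= #|[set e in E | e \subset S]|.
Proof.
move=> k3; pose c q := psi (a q); pose S := x |: [set c q | q in L].
have edge_sub j : active j -> psi @: blk_img j \subset S.
  move=> vj; apply/subsetP => _ /imsetP [_ /imsetP [q qL ->] ->]; rewrite !inE.
  case: (boolP (j \in M q)) => jMq; first by rewrite blk_moving // imset_f ?orbT.
  by rewrite blk_fixed_colour ?eqxx.
have edge_moving j q : q \in L -> j \in M q -> c q \in psi @: blk_img j.
  by move=> qL jMq; rewrite /c -(blk_moving qL jMq); do 2 apply: imset_f.
have edge_fixed j e : active j -> e \in L -> j \notin M e -> c e \notin psi @: blk_img j.
  move=> vj eL jMe; apply/imsetP => -[_ /imsetP [q qL ->] col_eq].
  have [q_e | qe] := eqVneq q e.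
    by move: (src_colour eL); rewrite -/(c e) col_eq q_e blk_fixed_colour ?eqxx.
  rewrite (blk_others vj eL jMe) // in col_eq.
  by rewrite (src_colour_inj eL qL col_eq) eqxx in qe.
exists S; split.
  have x_notin : x \notin [set c q | q in L].
    by apply/imsetP => -[q qL x_eq]; move: (src_colour qL); rewrite -/(c q) -x_eq eqxx.
  rewrite cardsU1 x_notin card_in_imset; last exact: src_colour_inj.
  by rewrite (quasiline_card L_quasi) k3.
apply/card_gt2P; exists (psi @: blk_img j1), (psi @: blk_img j2), (psi @: blk_img j3).
have edge j : active j -> psi @: blk_img j \in [set e in E | e \subset S].
  by move=> vj; rewrite inE (active_line vj).2 edge_sub.
split; first by split; apply: edge.
split; apply/negP => /eqP edge_eq.
- move: (edge_fixed _ _ vj1 uL j1Mu); rewrite edge_eq.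
  by rewrite (edge_moving _ _ uL (moving_others vj2 vL j2Mv uL uv)).
- move: (edge_fixed _ _ vj2 vL j2Mv); rewrite edge_eq.
  by rewrite (edge_moving _ _ vL (moving_others vj3 wL j3Mw vL vw)).
- move: (edge_fixed _ _ vj3 wL j3Mw); rewrite edge_eq.
  by rewrite (edge_moving _ _ wL (moving_others vj1 uL j1Mu wL _)) // eq_sym.
Qed.

End ThreeFixed.

Section TwoFixed.
Variables (j1 j2 : 'I_n) (u v w : {ffun 'I_(n * m) -> 'I_k}).
Hypotheses (vj1 : active j1) (vj2 : active j2) (uL : u \in L) (vL : v \in L) (wL : w \in L).
Hypotheses (j1Mu : j1 \notin M u) (j2Mv : j2 \notin M v).
Hypotheses (uv : u != v) (wu : w != u) (wv : w != v).
Hypothesis fixed_uv : forall j e, active j -> e \in L -> j \notin M e -> (e == u) || (e == v).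

Local Notation pu := (blk u j1).
Local Notation pv := (blk v j2).

Lemma active_moving_w j : active j -> j \in M w.
Proof. by move=> vj; apply: contraT => /(fixed_uv vj wL); rewrite (negbTE wu) (negbTE wv). Qed.

Lemma active_moving_v j : active j -> (j \in M v) = (j \notin M u).
Proof.
move=> vj; have [e eL jMe] := active_fixed vj.
case/orP: (fixed_uv vj eL jMe) => /eqP e_eq; subst e.
  by rewrite jMe (moving_others vj uL jMe vL) // eq_sym.
by rewrite (negbTE jMe) (moving_others vj vL jMe uL uv).
Qed.

Lemma line_pt_w t j : line_pt (M w) (g w) t j = if active j then t else blk u j.
Proof.
rewrite line_pt_rep //; case: (boolP (active j)) => [vj | nvj]; first by rewrite active_moving_w.
by rewrite (negbTE (inactive_fixed nvj wL)); exact: (varies_onPn nvj wL uL).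
Qed.

Lemma line_pt_u t j :
  line_pt (M u) (g u) t j = if active j then (if j \in M u then t else pu) else blk u j.
Proof.
rewrite line_pt_rep //; case: (boolP (active j)) => [vj | nvj].
  by case: (boolP (j \in M u)) => //= jMu; apply: fixed_blk_eq vj vj1 uL jMu j1Mu.
by rewrite (negbTE (inactive_fixed nvj uL)).
Qed.

Lemma line_pt_v t j :
  line_pt (M v) (g v) t j = if active j then (if j \in M u then pv else t) else blk u j.
Proof.
rewrite line_pt_rep //; case: (boolP (active j)) => [vj | nvj].
  rewrite (active_moving_v vj); case: (boolP (j \in M u)) => //= jMu.
  by apply: (fixed_blk_eq vj vj2 vL _ j2Mv); rewrite (active_moving_v vj) jMu.
by rewrite (negbTE (inactive_fixed nvj vL)); exact: (varies_onPn nvj vL uL).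
Qed.

Lemma moving_w : M w = M u :|: M v.
Proof.
apply/setP => j; rewrite inE; case: (boolP (active j)) => [vj | nvj].
  by rewrite active_moving_w // active_moving_v // orbN.
by rewrite !(negbTE (inactive_fixed nvj _)).
Qed.

Lemma moving_uv_disjoint : [disjoint M u & M v].
Proof.
rewrite -setI_eq0; apply/eqP/setP => j; rewrite !inE; apply/negbTE/andP => -[jMu].
by rewrite active_moving_v ?jMu // (moving_active uL jMu).
Qed.

Lemma two_fixed_lines_neq : [/\ line w != line u, line w != line v & line u != line v].
Proof.
have j1Mw := active_moving_w vj1; have j2Mw := active_moving_w vj2.
have j1Mv : j1 \in M v by rewrite active_moving_v.
split; apply: line_neq => //; apply/eqP => /setP eqM.
- by move: j1Mu; rewrite -eqM j1Mw.
- by move: j2Mv; rewrite -eqM j2Mw.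
- by move: j1Mu; rewrite eqM j1Mv.
Qed.

Lemma line_pt_wu : line_pt (M u) (g u) pu = line_pt (M w) (g w) pu.
Proof. by apply/ffunP => j; rewrite line_pt_u line_pt_w; case: ifP => //; case: ifP. Qed.

Lemma line_pt_wv : line_pt (M v) (g v) pv = line_pt (M w) (g w) pv.
Proof. by apply/ffunP => j; rewrite line_pt_v line_pt_w; case: ifP => //; case: ifP. Qed.

Lemma line_pt_uv : line_pt (M u) (g u) pv = line_pt (M v) (g v) pu.
Proof. by apply/ffunP => j; rewrite line_pt_u line_pt_v; case: ifP => //; case: ifP. Qed.

Lemma two_fixed_tripod : pu = pv -> tripod (line w) (line u) (line v) (M w) (M u) (M v).
Proof.
move=> pu_pv; have puX := blk_fixed_Pix uL j1Mu; have pvX := blk_fixed_Pix vL j2Mv.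
split; first exact: two_fixed_lines_neq.
split; last by split; [exact: moving_w | exact: moving_uv_disjoint].
apply/set0Pn; exists (line_pt (M w) (g w) pu).
rewrite !inE line_pt_in_line // -{1}line_pt_wu line_pt_in_line //=.
by rewrite pu_pv -line_pt_wv line_pt_in_line.
Qed.

Lemma two_fixed_triangle : pu != pv -> triangle (line w) (line u) (line v).
Proof.
move=> npuv; have puX := blk_fixed_Pix uL j1Mu; have pvX := blk_fixed_Pix vL j2Mv.
split; first exact: two_fixed_lines_neq.
split.
  split; apply/set0Pn.
  - exists (line_pt (M w) (g w) pu).
    by rewrite inE line_pt_in_line // -line_pt_wu line_pt_in_line.
  - exists (line_pt (M w) (g w) pv).
    by rewrite inE line_pt_in_line // -line_pt_wv line_pt_in_line.
  - exists (line_pt (M u) (g u) pv).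
    by rewrite inE line_pt_in_line // line_pt_uv line_pt_in_line.
have j2Mu : j2 \in M u by move: j2Mv; rewrite active_moving_v // negbK.
apply/setP => p; rewrite !inE; apply/negbTE/andP.
case=> [/andP [/imsetP [t _ ->] /imsetP [t' _ /ffunP eq_u]] /imsetP [t'' _ /ffunP eq_v]].
move: (eq_u j1) (eq_v j2).
rewrite line_pt_w line_pt_u line_pt_w line_pt_v vj1 vj2 (negbTE j1Mu) j2Mu.
by move=> t_pu t_pv; rewrite -t_pu -t_pv eqxx in npuv.
Qed.

Lemma two_fixed_false : False.
Proof.
have [Uw Uu Uv] := And3 (rep_in_calL wL) (rep_in_calL uL) (rep_in_calL vL).
have [pu_pv | npuv] := eqVneq pu pv.
  exact: no_tripod Uw Uu Uv (two_fixed_tripod pu_pv).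
exact: no_triangle Uw Uu Uv (two_fixed_triangle npuv).
Qed.

End TwoFixed.

Lemma fixed_blocks_absurd : False.
Proof.
have [j1 [j2 [u [v [[vj1 vj2 uL vL] [j1Mu j2Mv uv]]]]]] := exists_two_fixed.
case: (boolP [exists j, exists w in L, [&& active j, j \notin M w, w != u & w != v]]).
  case/existsP=> j3 /exists_inP [w wL /and4P [vj3 j3Mw wu wv]].
  have [uw vw] : u != w /\ v != w by rewrite !(eq_sym _ w).
  have [k_le3 | k_gt3] := leqP k 3; last first.
    exact: (three_fixed_k_gt3 vj1 vj2 vj3 uL vL wL j1Mu j2Mv j3Mw uv uw vw k_gt3).
  have k3 : k = 3 by apply/eqP; rewrite eqn_leq k_le3 k_gt2.
  apply: (K4_free k3).
  exact: (three_fixed_K4minus vj1 vj2 vj3 uL vL wL j1Mu j2Mv j3Mw uv uw vw k3).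
move/existsPn=> no_third; have [w wL] : exists2 w, w \in L & w \notin [set u; v].
  apply: exists_outside; rewrite (quasiline_card L_quasi) cards2.
  by case: (u != v) k_gt2 => // /ltnW.
rewrite in_set2 negb_or => /andP [wu wv].
apply: (two_fixed_false vj1 vj2 uL vL wL j1Mu j2Mv uv wu wv) => j e vj eL jMe.
apply: contraT; rewrite negb_or => /andP [eu ev].
by move/exists_inPn: (no_third j) => /(_ e eL); rewrite vj jMe eu ev.
Qed.

End FixedBlocks.

Lemma amalg_line : comb_line [set: 'I_k] L /\ [set psi (a q) | q in L] \in E.
Proof.
case: (boolP [exists s in L, psi (a s) == x]) => [|/exists_inPn src_colour].
  by case/exists_inP=> s sL /eqP s_x; apply: amalg_line_src_colour_x sL s_x.
case: (boolP [exists j, active j && [forall q in L, j \in M q]]) => [|/existsPn no_all_moving].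
  by case/existsP=> j0 /andP [vj0 /forall_inP moving0]; apply: amalg_line_all_moving vj0 moving0.
exfalso; apply: (fixed_blocks_absurd src_colour) => j vj.
by move: (no_all_moving j); rewrite vj => /forall_inPn [e eL jMe]; exists e.
Qed.

End Amalgamation.

Theorem proposition4p5 (k m n : nat) (V : finType) (E : {set {set V}})
  (P : {set {ffun 'I_m -> 'I_k}}) (psi : {ffun 'I_m -> 'I_k} -> V) (x : V)
  (calL : {set ({set 'I_n} * {ffun 'I_n -> {ffun 'I_m -> 'I_k}})}) :
  3 <= k ->
  uniform k E ->
  (k = 3 -> K4minus_free E) ->
  picture E P psi ->
  1 <= n ->
  (* calL: representations of combinatorial lines in (Pi_x)^n, Pi_x = psi^-1(x) *)
  (forall U, U \in calL -> line_rep [set p in P | psi p == x] U.1 U.2) ->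
  (* the lines of calL are pairwise distinct *)
  {in calL &, forall U W,
      line_of [set p in P | psi p == x] U.1 U.2 =
      line_of [set p in P | psi p == x] W.1 W.2 -> U = W} ->
  (* no tripods *)
  (forall U1 U2 U3, U1 \in calL -> U2 \in calL -> U3 \in calL ->
     ~ tripod (line_of [set p in P | psi p == x] U1.1 U1.2)
              (line_of [set p in P | psi p == x] U2.1 U2.2)
              (line_of [set p in P | psi p == x] U3.1 U3.2) U1.1 U2.1 U3.1) ->
  (* no triangles *)
  (forall U1 U2 U3, U1 \in calL -> U2 \in calL -> U3 \in calL ->
     ~ triangle (line_of [set p in P | psi p == x] U1.1 U1.2)
                (line_of [set p in P | psi p == x] U2.1 U2.2)
                (line_of [set p in P | psi p == x] U3.1 U3.2)) ->
  picture E (amalg_pts P calL) (amalg_psi P psi calL x).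
Proof.
move=> k_gt2 E_unif K4_free P_pic _ calL_rep calL_inj no_tripod no_triangle L LQ L_quasi.
have [q0 q0L] : exists q0, q0 \in L.
  by apply/card_gt0P; rewrite (quasiline_card L_quasi); apply: leq_trans k_gt2.
have [Ua0 _ _] := amalg_pickP (subsetP LQ q0 q0L).
pose rep_of q := odflt Ua0 (amalg_pick P calL q).
have rep_ofP q : q \in L -> amalg_pick P calL q = Some (rep_of q) /\
    [/\ (rep_of q).1 \in calL, (rep_of q).2 \in P & eta_plus (rep_of q).1 (rep_of q).2 = q].
  by move=> /(subsetP LQ) /amalg_pickP [Ua pick_q UaP]; rewrite /rep_of pick_q.
have [line_L edge_L] := amalg_line k_gt2 E_unif P_pic calL_rep calL_inj no_tripod no_triangle
  K4_free L_quasi (fun q qL => (rep_ofP q qL).2).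
split=> //; congr (_ \in E): edge_L; apply: eq_in_imset => q /rep_ofP [pick_q _].
by rewrite /amalg_psi -/(amalg_pick P calL q) pick_q.
Qed.
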